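(* Let $q_1,\dots,q_n,q,p\in F(V)$. Then: (1) if $q_1,\dots,q_n\vdash_{\L^*}q$, then $q_1,\dots,q_n\vdash_{\mathrm{sq}\L^*}(p\to p)\to q$; (2) if $q$ is regular, then $(p\to p)\to q\vdash_{\mathrm{sq}\L^*}q$.
   Context: Let $V$ be a set of propositional variables and $F(V)$ the set of formulas built from $V$ and the constant $1$ using $\to$ and $\neg$. Abbreviations: $p^+:=(p\to 1)\to 1$, $p^-:=(p\to\neg 1)\to\neg 1$ (binding more tightly than $\neg$), $p\vee q:=((p^+\to q^+)^+\to(\neg p)^-)\to((q^-\to p^-)^-\to p^-)$; an axiom ''$p\leftrightarrow q$'' stands for the two axioms $p\to q$ and $q\to p$. A formula is regular if it contains an occurrence of $\to$ or of $1$. The logic $\L^*$ has axiom schemas: (P1) $(p\to q)\leftrightarrow(\neg q\to\neg p)$; (P2) $p\leftrightarrow((q\to q)\to p)$; (P3) $\neg(p\to q)\leftrightarrow(q\to p)$; (P4) $p\to 1$; (P5) $1\leftrightarrow((1\to p)\to 1)$; (P6) $((p\to 1)\to((q\to 1)\to r))\to((q\to 1)\to((p\to 1)\to r))$; (P7) $(p\to q)\leftrightarrow((q^+\to p^-)\to(p^+\to q^-))$; (P8) $(p\to(\neg p\to q))^+\leftrightarrow(p^+\to(\neg p^+\to q^+))$; (P9) $(p\to(q\vee r))\leftrightarrow((p\to r)\vee(p\to q))$; (P10) $(p\vee(q\vee r))\leftrightarrow((p\vee q)\vee r)$; and rules (R1) from $p$ and $p\to q$ infer $q$; (R2) from $p\to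 q$ and $r\to t$ infer $(q\to r)\to(p\to t)$; (R3) from $p$ infer $p^-$. The logic $\mathrm{sq}\L^*$ has axiom schemas (Q1) $(p\to q)\leftrightarrow(\neg q\to\neg p)$; (Q2) $1\leftrightarrow((1\to p)\to 1)$; (Q3) $p\leftrightarrow((q\to q)\to p)$; (Q4) $(p\to q)\leftrightarrow((q^+\to p^-)\to(p^+\to q^-))$; (Q5) $\neg(p\to q)\leftrightarrow(q\to p)$; (Q6) $(p\to(\neg p\to q))^+\leftrightarrow(p^+\to(\neg p^+\to q^+))$; (Q7) $(p\to(q\vee r))\leftrightarrow((p\to r)\vee(p\to q))$; (Q8) $(p\vee(q\vee r))\leftrightarrow((p\vee q)\vee r)$; (Q9) $((p\to 1)\to((q\to 1)\to r))\to((q\to 1)\to((p\to 1)\to r))$; (Q10) $p\to 1$; and rules: (qMP) from $(r\to r)\to p$ and $(r\to r)\to(p\to q)$ infer $(r\to r)\to q$; (Reg) from $p$ infer $(r\to r)\to p$; (AReg1) from $(r\to r)\to(p\to q)$ infer $p\to q$; (AReg2) from $(r\to r)\to\neg(p\to q)$ infer $\neg(p\to q)$; (AReg3) from $(r\to r)\to\neg 1$ infer $\neg 1$; (AReg4) from $(r\to r)\to 1$ infer $1$; (Inv1) from $p$ infer $\neg\neg p$; (Inv2) from $\neg\neg p$ infer $p$; (Flat) from $p$ and $\neg 1$ infer $\neg p$; (R2$'$) from $p\to q$ and $r\to t$ infer $(q\to r)\to(p\to t)$; (R3$'$) from $(r\to r)\to p$ infer $p^-$. For a logic $L\in\{\L^*,\mathrm{sq}\L^*\}$,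 $q_1,\dots,q_n\vdash_L q$ means there is a finite sequence of formulas ending with $q$ in which each member is an axiom instance of $L$, one of the $q_i$, or follows from earlier members by a rule of $L$. *)

From Stdlib Require Import List.
Import ListNotations.

Set Implicit Arguments.

Inductive form (V : Type) : Type :=
| Var : V -> form V
| One : form V
| Imp : form V -> form V -> form V
| Neg : form V -> form V.

Arguments Var {V} _.
Arguments One {V}.
Arguments Imp {V} _ _.
Arguments Neg {V} _.

Section Abbrev.
Variable V : Type.
Implicit Types p q r t : form V.

Definition fplus p : form V := Imp (Imp p One) One.
Definition fminus p : form V := Imp (Imp p (Neg One)) (Neg One).
Definition fvee p q : form V :=
  Imp (Imp (fplus (Imp (fplus p) (fplus q))) (fminus (Neg p)))
      (Imp (fminus (Imp (fminus q) (fminus p))) (fminus p)).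

Fixpoint regular p : Prop :=
  match p with
  | Var _ => False
  | One => True
  | Imp _ _ => True
  | Neg a => regular a
  end.

(* "a <-> b" stands for the two axioms a -> b and b -> a *)
Definition biax (a b c : form V) : Prop := c = Imp a b \/ c = Imp b a.

Definition axiomL (c : form V) : Prop :=
  (exists p q, biax (Imp p q) (Imp (Neg q) (Neg p)) c)
  \/ (exists p q, biax p (Imp (Imp q q) p) c)
  \/ (exists p q, biax (Neg (Imp p q)) (Imp q p) c)
  \/ (exists p, c = Imp p One)
  \/ (exists p, biax One (Imp (Imp One p) One) c)
  \/ (exists p q r, c = Imp (Imp (Imp p One) (Imp (Imp q One) r))
                            (Imp (Imp q One) (Imp (Imp p One) r)))
  \/ (exists p q, biax (Imp p q)
                       (Imp (Imp (fplus q) (fminus p)) (Imp (fplus p) (fminus q))) c)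
  \/ (exists p q, biax (fplus (Imp p (Imp (Neg p) q)))
                       (Imp (fplus p) (Imp (Neg (fplus p)) (fplus q))) c)
  \/ (exists p q r, biax (Imp p (fvee q r)) (fvee (Imp p r) (Imp p q)) c)
  \/ (exists p q r, biax (fvee p (fvee q r)) (fvee (fvee p q) r) c).

Definition axiomSQ (c : form V) : Prop :=
  (exists p q, biax (Imp p q) (Imp (Neg q) (Neg p)) c)
  \/ (exists p, biax One (Imp (Imp One p) One) c)
  \/ (exists p q, biax p (Imp (Imp q q) p) c)
  \/ (exists p q, biax (Imp p q)
                       (Imp (Imp (fplus q) (fminus p)) (Imp (fplus p) (fminus q))) c)
  \/ (exists p q, biax (Neg (Imp p q)) (Imp q p) c)
  \/ (exists p q, biax (fplus (Imp p (Imp (Neg p) q)))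
                       (Imp (fplus p) (Imp (Neg (fplus p)) (fplus q))) c)
  \/ (exists p q r, biax (Imp p (fvee q r)) (fvee (Imp p r) (Imp p q)) c)
  \/ (exists p q r, biax (fvee p (fvee q r)) (fvee (fvee p q) r) c)
  \/ (exists p q r, c = Imp (Imp (Imp p One) (Imp (Imp q One) r))
                            (Imp (Imp q One) (Imp (Imp p One) r)))
  \/ (exists p, c = Imp p One).

Inductive derL (hyps : list (form V)) : form V -> Prop :=
| L_ax : forall c, axiomL c -> derL hyps c
| L_hyp : forall c, In c hyps -> derL hyps c
| L_R1 : forall p q, derL hyps p -> derL hyps (Imp p q) -> derL hyps q
| L_R2 : forall p q r t, derL hyps (Imp p q) -> derL hyps (Imp r t) ->
           derL hyps (Imp (Imp q r) (Imp p t))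
| L_R3 : forall p, derL hyps p -> derL hyps (fminus p).

Inductive derSQ (hyps : list (form V)) : form V -> Prop :=
| SQ_ax : forall c, axiomSQ c -> derSQ hyps c
| SQ_hyp : forall c, In c hyps -> derSQ hyps c
| SQ_qMP : forall p q r, derSQ hyps (Imp (Imp r r) p) ->
             derSQ hyps (Imp (Imp r r) (Imp p q)) -> derSQ hyps (Imp (Imp r r) q)
| SQ_Reg : forall p r, derSQ hyps p -> derSQ hyps (Imp (Imp r r) p)
| SQ_AReg1 : forall p q r, derSQ hyps (Imp (Imp r r) (Imp p q)) -> derSQ hyps (Imp p q)
| SQ_AReg2 : forall p q r, derSQ hyps (Imp (Imp r r) (Neg (Imp p q))) ->
               derSQ hyps (Neg (Imp p q))
| SQ_AReg3 : forall r, derSQ hyps (Imp (Imp r r) (Neg One)) -> derSQ hyps (Neg One)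
| SQ_AReg4 : forall r, derSQ hyps (Imp (Imp r r) One) -> derSQ hyps One
| SQ_Inv1 : forall p, derSQ hyps p -> derSQ hyps (Neg (Neg p))
| SQ_Inv2 : forall p, derSQ hyps (Neg (Neg p)) -> derSQ hyps p
| SQ_Flat : forall p, derSQ hyps p -> derSQ hyps (Neg One) -> derSQ hyps (Neg p)
| SQ_R2' : forall p q r t, derSQ hyps (Imp p q) -> derSQ hyps (Imp r t) ->
             derSQ hyps (Imp (Imp q r) (Imp p t))
| SQ_R3' : forall p r, derSQ hyps (Imp (Imp r r) p) -> derSQ hyps (fminus p).

End Abbrev.

From Stdlib Require Import List.
Import ListNotations.

Set Implicit Arguments.

(* L* and sqL* have the same axiom
   schemas, so axioms and hypotheses become available under the guard
   [(p -> p) ->] by Reg; R1 is simulated by qMP, R2 by removing the guards with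
   AReg1 and applying R2', and R3 by R3'.
   (2) is an induction on the regular formula q. AReg1-AReg4 remove the guard
   from [1], [a -> b], [~1] and [~(a -> b)]; the remaining case [~~b] reduces to
   [b], because every regular formula is provably equivalent to its double
   negation (Q5 for implications, Q2 for [1], contraposition Q1 under [~]), and
   Inv1 then restores the double negation. *)

Lemma axiomL_axiomSQ (V : Type) (c : form V) : axiomL c -> axiomSQ c.
Proof. unfold axiomL, axiomSQ; tauto. Qed.

Section SqDerivations.
Variable V : Type.
Variable hyps : list (form V).
Notation d := (derSQ hyps).

Lemma SQ_contra_ax (p q : form V) : d (Imp (Imp p q) (Imp (Neg q) (Neg p))).
Proof. apply SQ_ax; left; exists p, q; left; reflexivity. Qed.

Lemma SQ_one_guard_intro (p : form V) : d (Imp One (Imp (Imp One p) One)).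
Proof. apply SQ_ax; right; left; exists p; left; reflexivity. Qed.

Lemma SQ_one_guard_elim (p : form V) : d (Imp (Imp (Imp One p) One) One).
Proof. apply SQ_ax; right; left; exists p; right; reflexivity. Qed.

Lemma SQ_guard_intro_ax (p q : form V) : d (Imp p (Imp (Imp q q) p)).
Proof. apply SQ_ax; right; right; left; exists p, q; left; reflexivity. Qed.

Lemma SQ_guard_elim_ax (p q : form V) : d (Imp (Imp (Imp q q) p) p).
Proof. apply SQ_ax; right; right; left; exists p, q; right; reflexivity. Qed.

Lemma SQ_neg_imp_elim (p q : form V) : d (Imp (Neg (Imp p q)) (Imp q p)).
Proof. apply SQ_ax; do 4 right; left; exists p, q; left; reflexivity. Qed.

Lemma SQ_neg_imp_intro (p q : form V) : d (Imp (Imp q p) (Neg (Imp p q))).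
Proof. apply SQ_ax; do 4 right; left; exists p, q; right; reflexivity. Qed.

Lemma SQ_qMP_imp (r x y : form V) :
  d (Imp (Imp r r) x) -> d (Imp x y) -> d (Imp (Imp r r) y).
Proof. intros Hx Hxy; apply (SQ_qMP Hx), SQ_Reg, Hxy. Qed.

(* Unguarded modus ponens is only available when the conclusion is an
   implication, since the guard is then removable by AReg1. *)
Lemma SQ_MP_imp (a x y : form V) : d a -> d (Imp a (Imp x y)) -> d (Imp x y).
Proof.
  intros Ha Haxy; apply (SQ_AReg1 (r := a)).
  exact (SQ_qMP_imp (SQ_Reg a Ha) Haxy).
Qed.

Lemma SQ_imp_refl (s : form V) : d (Imp s s).
Proof.
  apply (SQ_AReg1 (r := s)).
  exact (SQ_qMP_imp (SQ_guard_intro_ax (Imp s s) s) (SQ_guard_elim_ax (Imp s s) s)).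
Qed.

Lemma SQ_imp_trans (x y z : form V) : d (Imp x y) -> d (Imp y z) -> d (Imp x z).
Proof.
  intros Hxy Hyz; apply (SQ_MP_imp Hxy), SQ_R2'; [apply SQ_imp_refl | exact Hyz].
Qed.

Lemma SQ_contra (x y : form V) : d (Imp x y) -> d (Imp (Neg y) (Neg x)).
Proof. intro Hxy; exact (SQ_MP_imp Hxy (SQ_contra_ax x y)). Qed.

Definition dneg_equiv (c : form V) : Prop :=
  d (Imp c (Neg (Neg c))) /\ d (Imp (Neg (Neg c)) c).

Lemma dneg_equiv_imp (x y : form V) : dneg_equiv (Imp x y).
Proof.
  split.
  - apply (SQ_imp_trans (SQ_neg_imp_intro y x)), SQ_contra, SQ_neg_imp_elim.
  - apply (SQ_imp_trans (SQ_contra (SQ_neg_imp_intro x y))), SQ_neg_imp_elim.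
Qed.

Lemma dneg_equiv_transfer (c e : form V) :
  d (Imp c e) -> d (Imp e c) -> dneg_equiv e -> dneg_equiv c.
Proof.
  intros Hce Hec [He_nne Hnne_e]; split.
  - apply (SQ_imp_trans Hce), (SQ_imp_trans He_nne), SQ_contra, SQ_contra, Hec.
  - apply (SQ_imp_trans (SQ_contra (SQ_contra Hce))), (SQ_imp_trans Hnne_e), Hec.
Qed.

Lemma dneg_equiv_neg (c : form V) : dneg_equiv c -> dneg_equiv (Neg c).
Proof. intros [Hc_nnc Hnnc_c]; split; apply SQ_contra; assumption. Qed.

Lemma dneg_equiv_regular (c : form V) : regular c -> dneg_equiv c.
Proof.
  induction c as [v | | x _ y _ | c IHc]; simpl; intro Hreg.
  - contradiction.
  - exact (dneg_equiv_transfer (SQ_one_guard_intro One) (SQ_one_guard_elim One)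
             (dneg_equiv_imp _ _)).
  - apply dneg_equiv_imp.
  - exact (dneg_equiv_neg (IHc Hreg)).
Qed.

Lemma SQ_unguard_regular_neg (q r : form V) : regular q ->
  (d (Imp (Imp r r) q) -> d q) /\ (d (Imp (Imp r r) (Neg q)) -> d (Neg q)).
Proof.
  induction q as [v | | x _ y _ | q IHq]; simpl; intro Hreg.
  - contradiction.
  - split; [apply SQ_AReg4 | apply SQ_AReg3].
  - split; [apply SQ_AReg1 | apply SQ_AReg2].
  - destruct (IHq Hreg) as [IHpos IHneg]; split; [exact IHneg |].
    intro Hnnq; apply SQ_Inv1, IHpos.
    exact (SQ_qMP_imp Hnnq (proj2 (dneg_equiv_regular q Hreg))).
Qed.

Lemma SQ_unguard_regular (q r : form V) :
  regular q -> d (Imp (Imp r r) q) -> d q.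
Proof. intro Hreg; exact (proj1 (SQ_unguard_regular_neg q r Hreg)). Qed.

End SqDerivations.

Lemma derL_derSQ_guarded (V : Type) (hyps : list (form V)) (p q : form V) :
  derL hyps q -> derSQ hyps (Imp (Imp p p) q).
Proof.
  induction 1 as [c Hax | c Hin | a b _ IHa _ IHab
                 | a b c e _ IHab _ IHce | a _ IHa].
  - apply SQ_Reg, SQ_ax, axiomL_axiomSQ, Hax.
  - apply SQ_Reg, SQ_hyp, Hin.
  - exact (SQ_qMP IHa IHab).
  - apply SQ_Reg, SQ_R2'; [exact (SQ_AReg1 IHab) | exact (SQ_AReg1 IHce)].
  - exact (SQ_Reg p (SQ_R3' IHa)).
Qed.

Theorem lemma4p1 (V : Type) (qs : list (form V)) (q p : form V) :
  (derL qs q -> derSQ qs (Imp (Imp p p) q)) /\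
  (regular q -> derSQ [Imp (Imp p p) q] q).
Proof.
  split.
  - apply derL_derSQ_guarded.
  - intro Hreg; apply (SQ_unguard_regular (r := p) Hreg), SQ_hyp; left; reflexivity.
Qed.
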